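(* Consider a Markov decision process with finite state set $S$, finite action set $A$, transition kernel $T(s'\mid s,a)$, initial state distribution $p_0$ and discount factor $\gamma\in[0,1)$. Let $\beta>0$, $\alpha\in[0,1)$, let $\mu^U(a\mid s)$ be a policy with $\mu^U(a\mid s)>0$ for all $(s,a)$, let $d^U$ be a probability distribution on $S\times A$, let $\Psi:S\times A\to\mathbb{R}$, and set $\delta(s,a)=\exp\big(\frac{\Psi(s,a)}{1-\alpha}\big)$. For $Q:S\times A\to\mathbb{R}$ and a policy $\pi$ define $$V_Q^\pi(s)=\mathbb{E}_{a\sim\pi(\cdot\mid s)}\Big[Q(s,a)-\beta\log\frac{\pi(a\mid s)}{\mu^U(a\mid s)}\Big],\qquad \mathcal{T}^\pi[Q](s,a)=Q(s,a)-\gamma\,\mathbb{E}_{s'\sim T(\cdot\mid s,a)}\big[V_Q^\pi(s')\big],$$ $$\widetilde{L}(Q,\pi)=(1-\gamma)\,\mathbb{E}_{s\sim p_0}\big[V_Q^\pi(s)\big]-\mathbb{E}_{(s,a)\sim d^U}\big[\delta(s,a)\,\mathcal{T}^\pi[Q](s,a)\big]+(1-\alpha)\,\mathbb{E}_{(s,a)\sim d^U}\big[\delta(s,a)\big].$$ Also define $V_Q(s)=\beta\log\big(\sum_{a}\mu^U(a\mid s)\exp(Q(s,a)/\beta)\big)$, $\mathcal{T}[Q](s,a)=Q(s,a)-\gamma\,\mathbb{E}_{s'\sim T(\cdot\mid s,a)}[V_Q(s')]$, and $$\widetilde{L}(Q)=(1-\gamma)\,\mathbb{E}_{s\sim p_0}\big[V_Q(s)\big]-\mathbb{E}_{(s,a)\sim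 d^U}\big[\delta(s,a)\,\mathcal{T}[Q](s,a)\big].$$ Then: (i) $\widetilde{L}(Q,\pi)$ is linear in $Q$ and concave in $\pi$, and consequently $\max_\pi\min_Q\widetilde{L}(Q,\pi)=\min_Q\max_\pi\widetilde{L}(Q,\pi)$. (ii) The min–max problem $\min_Q\max_\pi\widetilde{L}(Q,\pi)$ reduces to the non-adversarial problem $\min_Q\widetilde{L}(Q)$ (for every $Q$, $\max_\pi\widetilde{L}(Q,\pi)$ equals $\widetilde{L}(Q)$ plus the $Q$-independent constant $(1-\alpha)\mathbb{E}_{(s,a)\sim d^U}[\delta(s,a)]$), and $\widetilde{L}(Q)$ is convex in $Q$.
   Context: Policies $\pi$ range over all conditional distributions $\pi(\cdot\mid s)$ on $A$, $s\in S$. In the paper $\mu^U$ is the behavior policy of the union dataset, $d^U$ its state-action distribution, and $\Psi(s,a)=\log\frac{d^G(s,a)}{d^U(s,a)}-\alpha\log\frac{d^B(s,a)}{d^U(s,a)}$. *)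

From HB Require Import structures.
From mathcomp Require Import all_boot all_order all_algebra.
From mathcomp Require Import all_classical all_reals.
From mathcomp Require Import ereal sequences exp.
Set Implicit Arguments. Unset Strict Implicit. Unset Printing Implicit Defensive.
Import Order.TTheory GRing.Theory Num.Theory.
Local Open Scope ring_scope.

Section MDP.
Context {R : realType} {S A : finType}.

Definition is_dist {X : finType} (p : X -> R) : Prop :=
  (forall x, 0 <= p x) /\ \sum_(x : X) p x = 1.

Definition is_policy (pi : S -> A -> R) : Prop :=
  forall s, is_dist (pi s).

(* transition kernel T(s' | s, a), written T s a s' *)
Definition is_kernel (T : S -> A -> S -> R) : Prop :=
  forall s a, is_dist (T s a).

Variables (gamma beta alpha : R) (T : S -> A -> S -> R) (p0 : S -> R)
  (mu : S -> A -> R) (dU : S * A -> R) (Psi : S * A -> R).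

Definition delta (sa : S * A) : R := expR (Psi sa / (1 - alpha)).

(* V_Q^pi(s) = E_{a~pi(.|s)}[Q(s,a) - beta log(pi(a|s)/mu(a|s))]
   (terms with pi(a|s) = 0 contribute 0, i.e. the convention 0 log 0 = 0) *)
Definition VQpi (Q : S -> A -> R) (pi : S -> A -> R) (s : S) : R :=
  \sum_(a : A) pi s a * (Q s a - beta * ln (pi s a / mu s a)).

Definition TQpi (Q : S -> A -> R) (pi : S -> A -> R) (s : S) (a : A) : R :=
  Q s a - gamma * \sum_(s' : S) T s a s' * VQpi Q pi s'.

Definition Lpi (Q : S -> A -> R) (pi : S -> A -> R) : R :=
  (1 - gamma) * \sum_(s : S) p0 s * VQpi Q pi s
  - \sum_(sa : S * A) dU sa * (delta sa * TQpi Q pi sa.1 sa.2)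
  + (1 - alpha) * \sum_(sa : S * A) dU sa * delta sa.

Definition VQ (Q : S -> A -> R) (s : S) : R :=
  beta * ln (\sum_(a : A) mu s a * expR (Q s a / beta)).

Definition TQ (Q : S -> A -> R) (s : S) (a : A) : R :=
  Q s a - gamma * \sum_(s' : S) T s a s' * VQ Q s'.

Definition L (Q : S -> A -> R) : R :=
  (1 - gamma) * \sum_(s : S) p0 s * VQ Q s
  - \sum_(sa : S * A) dU sa * (delta sa * TQ Q sa.1 sa.2).

End MDP.

From HB Require Import structures.
From mathcomp Require Import all_boot all_order all_algebra.
From mathcomp Require Import all_classical all_reals.
From mathcomp Require Import ereal sequences exp.
From mathcomp Require Import ring lra.
Import Order.TTheory GRing.Theory Num.Theory.
Local Open Scope classical_set_scope.
Local Open Scope ring_scope.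

(* Writing rho = dU * delta and
     w s = (1 - gamma) p0 s + gamma * sum_(s',a) rho (s',a) T (s | s',a),
   both objectives telescope into  sum_s w s * V s - sum rho Q  (plus the
   constant c), with V = V_Q^pi resp. V_Q.  At each state V_Q^pi is the
   KL-regularised value  sum_a p a (q a - beta ln (p a / m a)):  affine in q,
   concave in p by convexity of x ln x, and by the Gibbs variational principle
   bounded by the soft value  beta ln sum_a m a exp (q a / beta),  with equality
   at the Gibbs distribution; the soft value is thus convex as a supremum of
   affine functions.  For the minimax equality: if the flow constraint
   sum_a rho (s,a) = w s holds everywhere, the policy pi = rho / w makes
   L(Q, pi) independent of Q, and Q_th = beta ln (pi / mu + th) brings
   L(Q) + c down to that value as th -> 0; otherwise L(Q) is unbounded below
   along Q = k * 1_{s}. *)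

(* The left-hand side is the tangent line of x |-> x ln (x / m) at y. *)
Lemma xlnx_ge_tangent {R : realType} {x y m : R} : 0 <= x -> 0 < y -> 0 < m ->
  x * ln (y / m) + x - y <= x * ln (x / m).
Proof.
move=> x_ge0 y_gt0 m_gt0.
have [->|x_neq0] := eqVneq x 0; first by rewrite !mul0r add0r sub0r oppr_le0 ltW.
have x_gt0 : 0 < x by rewrite lt_neqAle eq_sym x_neq0.
have yx_gt0 : 0 < y / x by rewrite divr_gt0.
have ln_yx : ln (y / x) <= y / x - 1.
  by have := @le_ln1Dx R (y / x - 1); rewrite subrKC; apply; lra.
have -> : ln (y / m) = ln (y / x) + ln (x / m).
  by rewrite -lnM ?posrE ?divr_gt0 // mulrA divfK // gt_eqF.
have := ler_wpM2l x_ge0 ln_yx.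
rewrite mulrBr mulr1 mulrCA divff ?mulr1 ?gt_eqF //; lra.
Qed.

Lemma xlnx_convex {R : realType} {x1 x2 m t : R} :
  0 <= x1 -> 0 <= x2 -> 0 < m -> 0 <= t <= 1 ->
  (t * x1 + (1 - t) * x2) * ln ((t * x1 + (1 - t) * x2) / m)
  <= t * (x1 * ln (x1 / m)) + (1 - t) * (x2 * ln (x2 / m)).
Proof.
move=> x1_ge0 x2_ge0 m_gt0 /andP[t_ge0 t_le1].
set x := t * x1 + (1 - t) * x2.
have t'_ge0 : 0 <= 1 - t by rewrite subr_ge0.
have [x_eq0|x_neq0] := eqVneq x 0.
  have tx1 : t * x1 = 0 by move: x_eq0; rewrite /x; nra.
  have tx2 : (1 - t) * x2 = 0 by move: x_eq0; rewrite /x; nra.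
  by rewrite x_eq0 mul0r !mulrA tx1 tx2 !mul0r addr0.
have x_gt0 : 0 < x by rewrite lt_neqAle eq_sym x_neq0 addr_ge0 ?mulr_ge0.
have := ler_wpM2l t_ge0 (xlnx_ge_tangent x1_ge0 x_gt0 m_gt0).
have := ler_wpM2l t'_ge0 (xlnx_ge_tangent x2_ge0 x_gt0 m_gt0).
rewrite /x; nra.
Qed.

Lemma sumr_mix {R : comPzRingType} (I : finType) (w x y : I -> R) (t : R) :
  \sum_(i : I) w i * (t * x i + (1 - t) * y i)
  = t * \sum_(i : I) w i * x i + (1 - t) * \sum_(i : I) w i * y i.
Proof. by rewrite !mulr_sumr -big_split; apply: eq_bigr => i _ /=; ring. Qed.

Section Gibbs.
Context {R : realType} {A : finType}.
Variables (b : R) (m : A -> R).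

(* [VQpi beta mu Q pi s] is [reg_value beta (mu s) (pi s) (Q s)] and
   [VQ beta mu Q s] is [soft_value beta (mu s) (Q s)]. *)
Definition reg_value (p q : A -> R) : R :=
  \sum_(a : A) p a * (q a - b * ln (p a / m a)).

Definition partition_fn (q : A -> R) : R := \sum_(a : A) m a * expR (q a / b).

Definition soft_value (q : A -> R) : R := b * ln (partition_fn q).

Definition gibbs (q : A -> R) (a : A) : R := m a * expR (q a / b) / partition_fn q.

Lemma reg_value_mixr (p q1 q2 : A -> R) (t : R) :
  reg_value p (fun a => t * q1 a + (1 - t) * q2 a)
  = t * reg_value p q1 + (1 - t) * reg_value p q2.
Proof. by rewrite !mulr_sumr -big_split; apply: eq_bigr => a _ /=; ring. Qed.

Hypothesis b_gt0 : 0 < b.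
Hypothesis m_gt0 : forall a, 0 < m a.

Lemma reg_value_concave (p1 p2 q : A -> R) (t : R) :
  (forall a, 0 <= p1 a) -> (forall a, 0 <= p2 a) -> 0 <= t <= 1 ->
  t * reg_value p1 q + (1 - t) * reg_value p2 q
  <= reg_value (fun a => t * p1 a + (1 - t) * p2 a) q.
Proof.
move=> p1_ge0 p2_ge0 t01.
rewrite !mulr_sumr -big_split; apply: ler_sum => a _ /=.
have := ler_wpM2l (ltW b_gt0) (xlnx_convex (p1_ge0 a) (p2_ge0 a) (m_gt0 a) t01).
lra.
Qed.

Hypothesis m_sum1 : \sum_(a : A) m a = 1.

Lemma partition_fn_gt0 (q : A -> R) : 0 < partition_fn q.
Proof.
have [a0 _ | A_empty] := pickP (fun _ : A => true).
  rewrite /partition_fn (bigD1 a0) //= ltr_pwDl ?mulr_gt0 ?expR_gt0 //.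
  by apply: sumr_ge0 => a _; rewrite mulr_ge0 ?expR_ge0 ?ltW.
by move: m_sum1; rewrite big_pred0 // => /eqP; rewrite eq_sym oner_eq0.
Qed.

Lemma gibbs_gt0 (q : A -> R) (a : A) : 0 < gibbs q a.
Proof. by rewrite divr_gt0 ?mulr_gt0 ?expR_gt0 ?partition_fn_gt0. Qed.

Lemma gibbs_dist (q : A -> R) : is_dist (gibbs q).
Proof.
split=> [a|]; first exact/ltW/gibbs_gt0.
by rewrite -mulr_suml divff // gt_eqF ?partition_fn_gt0.
Qed.

Lemma ln_gibbs (q : A -> R) (a : A) :
  ln (gibbs q a / m a) = q a / b - ln (partition_fn q).
Proof.
have -> : gibbs q a / m a = expR (q a / b) / partition_fn q.
  by rewrite /gibbs; field; rewrite !gt_eqF ?partition_fn_gt0.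
by rewrite ln_div ?posrE ?expR_gt0 ?partition_fn_gt0 // expRK.
Qed.

Lemma reg_value_gibbs (q : A -> R) : reg_value (gibbs q) q = soft_value q.
Proof.
have cancel_q a : q a - b * (q a / b - ln (partition_fn q)) = b * ln (partition_fn q).
  by field; rewrite gt_eqF.
rewrite /reg_value; under eq_bigr => a _ do rewrite ln_gibbs cancel_q.
by rewrite -mulr_suml (gibbs_dist q).2 mul1r.
Qed.

(* Gibbs variational principle: summing the tangent bound at gibbs q gives
   KL(p || gibbs q) >= 0. *)
Lemma reg_value_le_soft (p q : A -> R) : is_dist p -> reg_value p q <= soft_value q.
Proof.
move=> [p_ge0 p_sum1]; set L := ln (partition_fn q).
have pointwise a : p a * (q a - b * ln (p a / m a)) <= b * (p a * L + gibbs q a - p a).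
  have := xlnx_ge_tangent (p_ge0 a) (gibbs_gt0 q a) (m_gt0 a).
  rewrite ln_gibbs -/L => /(ler_wpM2l (ltW b_gt0)).
  have -> : b * (p a * (q a / b - L) + p a - gibbs q a)
            = p a * q a - b * (p a * L + gibbs q a - p a) by field; rewrite gt_eqF.
  lra.
apply: le_trans (ler_sum _ (fun a _ => pointwise a)) _.
rewrite -mulr_sumr !sumrB big_split /= -mulr_suml p_sum1 (gibbs_dist q).2.
by rewrite mul1r addrK.
Qed.

Lemma soft_value_convex (q1 q2 : A -> R) (t : R) : 0 <= t <= 1 ->
  soft_value (fun a => t * q1 a + (1 - t) * q2 a)
  <= t * soft_value q1 + (1 - t) * soft_value q2.
Proof.
move=> /andP[t_ge0 t_le1].
rewrite -reg_value_gibbs reg_value_mixr.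
have t'_ge0 : 0 <= 1 - t by rewrite subr_ge0.
by apply: lerD; apply: ler_wpM2l => //; apply: reg_value_le_soft; apply: gibbs_dist.
Qed.

Lemma soft_value_ln_shift (p : A -> R) (th : R) : is_dist p -> 0 < th ->
  soft_value (fun a => b * ln (p a / m a + th)) = b * ln (1 + th).
Proof.
move=> [p_ge0 p_sum1] th_gt0; rewrite /soft_value /partition_fn; congr (b * ln _).
transitivity (\sum_(a : A) (p a + th * m a)).
  apply: eq_bigr => a _; have m_neq0 : m a != 0 by rewrite gt_eqF.
  rewrite [b * _]mulrC mulfK ?gt_eqF // lnK; first by field.
  by rewrite posrE ltr_wpDl ?divr_ge0 ?p_ge0 ?(ltW (m_gt0 a)).
by rewrite big_split /= -mulr_sumr p_sum1 m_sum1 mulr1.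
Qed.

Lemma soft_value_cst (c : R) : soft_value (fun=> c) = c.
Proof.
by rewrite /soft_value /partition_fn -mulr_suml m_sum1 mul1r expRK mulrC divfK ?gt_eqF.
Qed.

End Gibbs.

Lemma sum_pair {R : nmodType} {I J : finType} (F : I * J -> R) :
  \sum_(ij : I * J) F ij = \sum_(i : I) \sum_(j : J) F (i, j).
Proof. by rewrite pair_bigA; apply: eq_bigr => -[]. Qed.

Lemma ereal_sup_inf_le_inf_sup {R : realType} {X Y : Type} (P : set Y)
    (f : X -> Y -> \bar R) :
  (ereal_sup [set ereal_inf (range (fun x => f x y)) | y in P]
   <= ereal_inf (range (fun x => ereal_sup [set f x y | y in P])))%E.
Proof.
apply/ereal_supP => _ [y Py <-]; apply/ereal_infP => _ [x _ <-].
apply: (@le_trans _ _ (f x y)).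
  by apply: ereal_inf_lbound; exists x.
by apply: ereal_sup_ubound; exists y.
Qed.

Section MDP.
Context {R : realType} {S A : finType}.
Variables (T : S -> A -> S -> R) (p0 : S -> R) (gamma beta alpha : R)
  (mu : S -> A -> R) (dU : S * A -> R) (Psi : S * A -> R).

Local Notation rho sa := (dU sa * delta alpha Psi sa).
Local Notation cst := ((1 - alpha) * \sum_(sa : S * A) dU sa * delta alpha Psi sa).
Local Notation Lt := (Lpi gamma beta alpha T p0 mu dU Psi).
Local Notation Lq := (L gamma beta alpha T p0 mu dU Psi).

Definition state_weight (s : S) : R :=
  (1 - gamma) * p0 s + gamma * \sum_(sa : S * A) rho sa * T sa.1 sa.2 s.

Local Notation w := state_weight.

Lemma objective_split (Q : S -> A -> R) (V : S -> R) :
  (1 - gamma) * \sum_(s : S) p0 s * V s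
  - \sum_(sa : S * A) dU sa * (delta alpha Psi sa *
        (Q sa.1 sa.2 - gamma * \sum_(s' : S) T sa.1 sa.2 s' * V s'))
  = \sum_(s : S) w s * V s - \sum_(sa : S * A) rho sa * Q sa.1 sa.2.
Proof.
have -> : \sum_(s : S) w s * V s = (1 - gamma) * \sum_(s : S) p0 s * V s
    + gamma * \sum_(sa : S * A) rho sa * \sum_(s : S) T sa.1 sa.2 s * V s.
  under eq_bigr => s _ do rewrite mulrDl -!mulrA mulr_suml.
  rewrite big_split /= -!mulr_sumr; congr (_ + _ * _).
  rewrite exchange_big /=; apply: eq_bigr => sa _.
  by rewrite mulr_sumr; apply: eq_bigr => s _; rewrite !mulrA.
have -> : \sum_(sa : S * A) dU sa * (delta alpha Psi sa *
        (Q sa.1 sa.2 - gamma * \sum_(s' : S) T sa.1 sa.2 s' * V s'))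
  = \sum_(sa : S * A) rho sa * Q sa.1 sa.2 - gamma *
     \sum_(sa : S * A) rho sa * \sum_(s : S) T sa.1 sa.2 s * V s.
  by rewrite mulr_sumr -sumrB; apply: eq_bigr => sa _; ring.
ring.
Qed.

Lemma Lpi_split (Q pi : S -> A -> R) : Lt Q pi =
  \sum_(s : S) w s * reg_value beta (mu s) (pi s) (Q s)
  - \sum_(sa : S * A) rho sa * Q sa.1 sa.2 + cst.
Proof. by rewrite /Lpi /TQpi objective_split. Qed.

Lemma L_split (Q : S -> A -> R) : Lq Q =
  \sum_(s : S) w s * soft_value beta (mu s) (Q s)
  - \sum_(sa : S * A) rho sa * Q sa.1 sa.2.
Proof. by rewrite /L /TQ objective_split. Qed.

Hypothesis T_kernel : is_kernel T.
Hypothesis p0_dist : is_dist p0.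
Hypothesis gamma_ge0 : 0 <= gamma.
Hypothesis gamma_lt1 : gamma < 1.
Hypothesis beta_gt0 : 0 < beta.
Hypothesis mu_policy : is_policy mu.
Hypothesis mu_gt0 : forall s a, 0 < mu s a.
Hypothesis dU_dist : is_dist dU.

Let mu_sum1 (s : S) : \sum_(a : A) mu s a = 1. Proof. by case: (mu_policy s). Qed.

Lemma rho_ge0 (sa : S * A) : 0 <= rho sa.
Proof. by rewrite mulr_ge0 ?expR_ge0 //; case: dU_dist. Qed.

Lemma state_weight_ge0 (s : S) : 0 <= w s.
Proof.
rewrite addr_ge0 ?mulr_ge0 ?subr_ge0 ?(ltW gamma_lt1) //; first by case: p0_dist.
by apply: sumr_ge0 => sa _; rewrite mulr_ge0 ?rho_ge0 //; case: (T_kernel sa.1 sa.2).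
Qed.

Lemma Lpi_mixl (Q1 Q2 pi : S -> A -> R) (t : R) :
  Lt (fun s a => t * Q1 s a + (1 - t) * Q2 s a) pi = t * Lt Q1 pi + (1 - t) * Lt Q2 pi.
Proof.
rewrite !Lpi_split /=.
under eq_bigr => s _ do rewrite reg_value_mixr.
rewrite !sumr_mix; ring.
Qed.

Lemma Lpi_concave (Q pi1 pi2 : S -> A -> R) (t : R) :
  is_policy pi1 -> is_policy pi2 -> 0 <= t <= 1 ->
  t * Lt Q pi1 + (1 - t) * Lt Q pi2 <= Lt Q (fun s a => t * pi1 s a + (1 - t) * pi2 s a).
Proof.
move=> pi1_policy pi2_policy t01; rewrite !Lpi_split.
have : \sum_(s : S) w s * (t * reg_value beta (mu s) (pi1 s) (Q s)
                             + (1 - t) * reg_value beta (mu s) (pi2 s) (Q s))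
       <= \sum_(s : S) w s * reg_value beta (mu s)
                             (fun a => t * pi1 s a + (1 - t) * pi2 s a) (Q s).
  apply: ler_sum => s _; rewrite ler_wpM2l ?state_weight_ge0 //.
  by apply: reg_value_concave => //; [case: (pi1_policy s)|case: (pi2_policy s)].
rewrite sumr_mix; lra.
Qed.

Definition gibbs_policy (Q : S -> A -> R) (s : S) : A -> R := gibbs beta (mu s) (Q s).

Lemma gibbs_policyP (Q : S -> A -> R) : is_policy (gibbs_policy Q).
Proof. by move=> s; apply: gibbs_dist => //; exact: mu_sum1. Qed.

Lemma Lpi_le_L (Q pi : S -> A -> R) : is_policy pi -> Lt Q pi <= Lq Q + cst.
Proof.
move=> pi_policy; rewrite Lpi_split L_split !lerD2r.
apply: ler_sum => s _; rewrite ler_wpM2l ?state_weight_ge0 //.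
by apply: reg_value_le_soft => //; exact: mu_sum1.
Qed.

Lemma Lpi_gibbs (Q : S -> A -> R) : Lt Q (gibbs_policy Q) = Lq Q + cst.
Proof.
rewrite Lpi_split L_split; congr (_ - _ + _); apply: eq_bigr => s _.
by rewrite reg_value_gibbs.
Qed.

Lemma L_convex (Q1 Q2 : S -> A -> R) (t : R) : 0 <= t <= 1 ->
  Lq (fun s a => t * Q1 s a + (1 - t) * Q2 s a) <= t * Lq Q1 + (1 - t) * Lq Q2.
Proof.
move=> t01; rewrite !L_split /= sumr_mix !mulrBr addrACA -opprD lerD2r -sumr_mix.
apply: ler_sum => s _; rewrite ler_wpM2l ?state_weight_ge0 //.
by apply: soft_value_convex => //; exact: mu_sum1.
Qed.

Lemma ereal_sup_Lpi (Q : S -> A -> R) :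
  ereal_sup [set (Lt Q pi)%:E | pi in is_policy] = (Lq Q + cst)%:E.
Proof.
apply/le_anti/andP; split.
  by apply/ereal_supP => _ [pi pi_policy <-]; rewrite lee_fin Lpi_le_L.
apply: le_ereal_sup_tmp; exists (Lq Q + cst)%:E => //.
by exists (gibbs_policy Q); [exact: gibbs_policyP | rewrite Lpi_gibbs].
Qed.

Definition balanced (pi : S -> A -> R) : Prop := forall s a, w s * pi s a = rho (s, a).

Lemma Lpi_balanced (Q pi : S -> A -> R) : balanced pi ->
  Lt Q pi = cst - beta * \sum_(sa : S * A) rho sa * ln (pi sa.1 sa.2 / mu sa.1 sa.2).
Proof.
move=> pi_bal; rewrite Lpi_split.
have -> : \sum_(s : S) w s * reg_value beta (mu s) (pi s) (Q s)
    = \sum_(sa : S * A) rho sa * (Q sa.1 sa.2 - beta * ln (pi sa.1 sa.2 / mu sa.1 sa.2)).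
  rewrite sum_pair; apply: eq_bigr => s _; rewrite mulr_sumr; apply: eq_bigr => a _.
  by rewrite mulrA pi_bal.
under eq_bigr => sa _ do rewrite mulrBr mulrCA.
by rewrite sumrB -mulr_sumr; ring.
Qed.

Lemma balanced_policy_exists : (forall s, \sum_(a : A) rho (s, a) = w s) ->
  exists2 pi, is_policy pi & balanced pi.
Proof.
move=> flow; exists (fun s a => if w s == 0 then mu s a else rho (s, a) / w s).
  move=> s; case: eqP => [_|/eqP w_neq0]; first exact: mu_policy.
  split=> [a|]; first by rewrite divr_ge0 ?rho_ge0 ?state_weight_ge0.
  by rewrite -mulr_suml flow divff.
move=> s a; case: eqP => [w_eq0|/eqP w_neq0]; last by rewrite mulrC divfK.
rewrite w_eq0 mul0r; apply/esym.
apply: (psumr_eq0P (P := predT) (F := fun a => rho (s, a))) => // [a' _|].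
  exact: rho_ge0.
exact: etrans (flow s) w_eq0.
Qed.

(* The soft value of Q_th is beta * ln (1 + th) at every state, while
   Q_th >= beta * ln (pi / mu) wherever rho > 0 (hence pi > 0). *)
Lemma L_shift_le (pi : S -> A -> R) (th : R) :
  is_policy pi -> balanced pi -> 0 < th ->
  Lq (fun s a => beta * ln (pi s a / mu s a + th))
  <= beta * th * \sum_(s : S) w s
     - beta * \sum_(sa : S * A) rho sa * ln (pi sa.1 sa.2 / mu sa.1 sa.2).
Proof.
move=> pi_policy pi_bal th_gt0; rewrite L_split /=.
have soft s : soft_value beta (mu s) (fun a => beta * ln (pi s a / mu s a + th))
              = beta * ln (1 + th).
  exact: soft_value_ln_shift.
under eq_bigr => s _ do rewrite soft.
have ln_le : ln (1 + th) <= th by apply: le_ln1Dx; lra.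
have W_term : \sum_(s : S) w s * (beta * ln (1 + th)) <= beta * th * \sum_(s : S) w s.
  have W_ge0 : 0 <= \sum_(s : S) w s by apply: sumr_ge0 => s _; exact: state_weight_ge0.
  by rewrite -mulr_suml mulrC ler_wpM2r // ler_pM2l.
have rho_term : beta * \sum_(sa : S * A) rho sa * ln (pi sa.1 sa.2 / mu sa.1 sa.2)
    <= \sum_(sa : S * A) rho sa * (beta * ln (pi sa.1 sa.2 / mu sa.1 sa.2 + th)).
  rewrite mulr_sumr; apply: ler_sum => -[s a] _ /=; rewrite mulrCA.
  have [->|rho_neq0] := eqVneq (rho (s, a)) 0; first by rewrite !mul0r.
  rewrite ler_wpM2l ?rho_ge0 // ler_wpM2l ?(ltW beta_gt0) //.
  have pi_gt0 : 0 < pi s a.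
    rewrite lt_neqAle eq_sym; case: (pi_policy s) => -> _; rewrite andbT.
    by apply: contraNneq rho_neq0 => pi_eq0; rewrite -pi_bal pi_eq0 mulr0.
  have ratio_gt0 : 0 < pi s a / mu s a by rewrite divr_gt0.
  by rewrite ler_ln ?posrE ?lerDl ?ltW ?addr_gt0.
lra.
Qed.

Lemma inf_L_le_balanced (pi : S -> A -> R) : is_policy pi -> balanced pi ->
  (ereal_inf (range (fun Q => (Lq Q + cst)%:E))
   <= (cst - beta * \sum_(sa : S * A) rho sa * ln (pi sa.1 sa.2 / mu sa.1 sa.2))%:E)%E.
Proof.
move=> pi_policy pi_bal; apply/lee_addgt0Pr => e e_gt0.
set W := \sum_(s : S) w s.
have W_ge0 : 0 <= W by apply: sumr_ge0 => s _; exact: state_weight_ge0.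
set th := e / (beta * (W + 1)).
have th_gt0 : 0 < th by rewrite divr_gt0 // mulr_gt0 // ltr_wpDl.
have th_small : beta * th * W <= e.
  have -> : beta * th * W = e * (W / (W + 1)) by rewrite /th; field; rewrite !gt_eqF ?ltr_wpDl.
  by rewrite ler_piMr ?(ltW e_gt0) // ler_pdivrMr ?ltr_wpDl // mul1r lerDl.
apply: ge_ereal_inf; exists (Lq (fun s a => beta * ln (pi s a / mu s a + th)) + cst)%:E.
  by exists (fun s a => beta * ln (pi s a / mu s a + th)).
rewrite -EFinD lee_fin; have := L_shift_le pi th pi_policy pi_bal th_gt0; rewrite -/W; lra.
Qed.

Lemma L_indicator (s0 : S) (k : R) :
  Lq (fun s _ => if s == s0 then k else 0) = k * (w s0 - \sum_(a : A) rho (s0, a)).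
Proof.
have pick (F : S -> R) : \sum_(s : S) F s * (if s == s0 then k else 0) = F s0 * k.
  by rewrite (bigD1 s0) //= eqxx big1 ?addr0 // => s /negbTE ->; rewrite mulr0.
rewrite L_split sum_pair /=.
under eq_bigr => s _ do rewrite soft_value_cst //.
under [X in _ - X]eq_bigr => s _ do rewrite -mulr_suml.
rewrite !pick; ring.
Qed.

Lemma inf_L_unbounded (s0 : S) : \sum_(a : A) rho (s0, a) != w s0 ->
  ereal_inf (range (fun Q => (Lq Q + cst)%:E)) = -oo%E.
Proof.
move=> flow_fails; apply: eq_ninfty => r.
set k := (r - cst) / (w s0 - \sum_(a : A) rho (s0, a)).
apply: ge_ereal_inf; exists (Lq (fun s _ => if s == s0 then k else 0) + cst)%:E.
  by exists (fun s _ => if s == s0 then k else 0).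
by rewrite lee_fin L_indicator divfK ?subrK // subr_eq0 eq_sym.
Qed.

Lemma Lpi_minimax :
  ereal_sup [set ereal_inf (range (fun Q => (Lt Q pi)%:E)) | pi in is_policy]
  = ereal_inf (range (fun Q => ereal_sup [set (Lt Q pi)%:E | pi in is_policy])).
Proof.
apply/le_anti/andP; split; first exact: ereal_sup_inf_le_inf_sup.
have -> : (fun Q => ereal_sup [set (Lt Q pi)%:E | pi in is_policy])
          = (fun Q => (Lq Q + cst)%:E) by apply/funext => Q; exact: ereal_sup_Lpi.
have [flow|] := pselect (forall s, \sum_(a : A) rho (s, a) = w s); last first.
  by move=> /existsNP[s0 /eqP flow_fails]; rewrite (inf_L_unbounded s0 flow_fails) leNye.
have [pi pi_policy pi_bal] := balanced_policy_exists flow.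
apply: le_trans (inf_L_le_balanced pi pi_policy pi_bal) _.
apply: le_ereal_sup_tmp; exists (ereal_inf (range (fun Q => (Lt Q pi)%:E)));
  first by exists pi.
by apply/ereal_infP => _ [Q _ <-]; rewrite Lpi_balanced.
Qed.

End MDP.

Theorem proposition4p4 (R : realType) (S A : finType)
  (T : S -> A -> S -> R) (p0 : S -> R) (gamma beta alpha : R)
  (mu : S -> A -> R) (dU : S * A -> R) (Psi : S * A -> R) :
  is_kernel T -> is_dist p0 -> 0 <= gamma -> gamma < 1 ->
  0 < beta -> 0 <= alpha -> alpha < 1 ->
  is_policy mu -> (forall s a, 0 < mu s a) ->
  is_dist dU ->
  let Lt := Lpi gamma beta alpha T p0 mu dU Psi in
  let Lq := L gamma beta alpha T p0 mu dU Psi in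
  let c := (1 - alpha) * \sum_(sa : S * A) dU sa * delta alpha Psi sa in
  let mix := fun (t : R) (f g : S -> A -> R) =>
               (fun s a => t * f s a + (1 - t) * g s a) in
  (* (i) affine (linear) in Q *)
  (forall pi Q1 Q2 (t : R), is_policy pi ->
     Lt (mix t Q1 Q2) pi = t * Lt Q1 pi + (1 - t) * Lt Q2 pi) /\
  (* (i) concave in pi *)
  (forall Q pi1 pi2 (t : R), is_policy pi1 -> is_policy pi2 ->
     0 <= t <= 1 ->
     t * Lt Q pi1 + (1 - t) * Lt Q pi2 <= Lt Q (mix t pi1 pi2)) /\
  (* (i) minimax equality (sup/inf in extended reals) *)
  (ereal_sup [set ereal_inf (range (fun Q => (Lt Q pi)%:E)) | pi in is_policy]
   = ereal_inf (range (fun Q =>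
       ereal_sup [set (Lt Q pi)%:E | pi in is_policy]))) /\
  (* (ii) max over pi of Lt Q pi equals Lq Q + c, attained *)
  (forall Q, (exists2 pi, is_policy pi & Lt Q pi = Lq Q + c) /\
             (forall pi, is_policy pi -> Lt Q pi <= Lq Q + c)) /\
  (* (ii) Lq convex in Q *)
  (forall Q1 Q2 (t : R), 0 <= t <= 1 ->
     Lq (mix t Q1 Q2) <= t * Lq Q1 + (1 - t) * Lq Q2).
Proof.
move=> T_kernel p0_dist gamma_ge0 gamma_lt1 beta_gt0 _ _ mu_policy mu_gt0 dU_dist Lt Lq c mix.
split; first by move=> pi Q1 Q2 t _; apply: Lpi_mixl.
split; first by move=> Q pi1 pi2 t; apply: Lpi_concave.
split; first by apply: Lpi_minimax.
split; last by move=> Q1 Q2 t; apply: L_convex.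
move=> Q; split; last by move=> pi; apply: Lpi_le_L.
by exists (gibbs_policy beta mu Q); [apply: gibbs_policyP | apply: Lpi_gibbs].
Qed.
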